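(* Let $k\ge 3$, let $G_1,\ldots,G_k$ be a finite sequence of pairwise disjoint connected graphs and let $x_i\in V(G_i)$. Let $G$ be the circuit of the graphs $\{G_i\}_{i=1}^k$ with respect to the vertices $\{x_i\}_{i=1}^k$. Then $$SO(G)>\frac{|d_{x_1}-d_{x_k}|}{\sqrt{2}}+\sum_{i=1}^{k}SO(G_i)+\sum_{i=1}^{k-1}\frac{|d_{x_i}-d_{x_{i+1}}|}{\sqrt{2}},$$ where $d_v$ denotes the degree of $v$ in $G$.
   Context: All graphs are finite and simple. For a graph $H$, $SO(H)=\sum_{uv\in E(H)}\sqrt{d_u^2+d_v^2}$, where $d_u$ is the degree of $u$ in $H$ (the Sombor index). The circuit of $G_1,\ldots,G_k$ with respect to $x_1,\ldots,x_k$ is the graph obtained from the disjoint union of $G_1,\ldots,G_k$ and a cycle $C_k$ with vertices $c_1,\ldots,c_k$ in cyclic order, by identifying $x_i$ with $c_i$ for each $i$ (so the edges $x_ix_{i+1}$, $1\le i\le k-1$, and $x_kx_1$ are added). *)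

From HB Require Import structures.
From mathcomp Require Import all_boot all_order all_algebra.
From mathcomp Require Import reals.
Set Implicit Arguments. Unset Strict Implicit. Unset Printing Implicit Defensive.
Import Order.TTheory GRing.Theory Num.Theory.
Local Open Scope ring_scope.

Record sgraph := SGraph {
  vert : finType;
  adj : rel vert;
  adj_sym : symmetric adj;
  adj_irr : irreflexive adj }.

Definition connected_graph (G : sgraph) : Prop :=
  forall u v : vert G, connect (@adj G) u v.

Definition deg (T : finType) (e : rel T) (u : T) : nat := #|[set v | e u v]|.

(* Sombor index: sum over edges uv of sqrt(d_u^2 + d_v^2); each unordered edge
   is counted twice among ordered adjacent pairs, hence the factor 1/2. *)
Definition SO (R : realType) (T : finType) (e : rel T) : R :=
  2^-1 * \sum_(p : T * T | e p.1 p.2)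
           Num.sqrt ((deg e p.1)%:R ^+ 2 + (deg e p.2)%:R ^+ 2).

Definition SOg (R : realType) (G : sgraph) : R := SO R (@adj G).

(* The circuit of G_0,...,G_{k-1} w.r.t. x_0,...,x_{k-1}: vertex set is the
   disjoint union {i : 'I_k & vert (G i)}; edges are the edges inside each G_i
   plus the cycle edges x_i x_{i+1 mod k}. *)
Definition circ_vert k (G : 'I_k -> sgraph) : finType :=
  {i : 'I_k & vert (G i)}.

Definition circ_adj k (G : 'I_k -> sgraph) (x : forall i, vert (G i)) :
    rel (circ_vert G) :=
  fun u v =>
    ((tag u == tag v) && @adj (G (tag u)) (tagged u) (tagged_as u v))
    || [exists i : 'I_k,
          ((u == Tagged (fun j => vert (G j)) (x i))
            && (v == Tagged (fun j => vert (G j)) (x (ordS i))))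
       || ((v == Tagged (fun j => vert (G j)) (x i))
            && (u == Tagged (fun j => vert (G j)) (x (ordS i))))].

Arguments circ_adj {k} G x.

(* degree in the circuit G of the vertex x_i (0-indexed, i < k; 0 otherwise) *)
Definition dx k (G : 'I_k -> sgraph) (x : forall i, vert (G i)) (i : nat) : nat :=
  match (insub i : option 'I_k) with
  | Some j => deg (circ_adj G x) (Tagged (fun j => vert (G j)) (x j))
  | None => 0%N
  end.

Arguments dx {k} G x i.

From HB Require Import structures.
From mathcomp Require Import all_boot all_order all_algebra.
From mathcomp Require Import reals lra zify.
Import Order.TTheory GRing.Theory Num.Theory.
Local Open Scope ring_scope.
Set Implicit Arguments. Unset Strict Implicit.

(* Split the ordered adjacent pairs of the circuit into pairs inside one G_i
   and pairs across two of them.  Inside G_i every degree can only grow, so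
   these pairs contribute at least the sum of the SO(G_i).  Across, each cycle
   edge x_i x_(i+1) appears in both orientations (distinct since k >= 3), and
   its weight sqrt(a^2 + b^2) strictly exceeds |a - b| / sqrt 2 because
   a = d_(x_i) > 0. *)

Lemma val_ordS n (i : 'I_n) : nat_of_ord (ordS i) = if i.+1 == n then 0%N else i.+1.
Proof.
case: eqP => [Si_eq | Si_neq]; first by rewrite /= Si_eq modnn.
by rewrite /= modn_small // ltn_neqAle (ltn_ord i) andbT; apply/eqP.
Qed.

Lemma ordS_neq n (i : 'I_n) : (1 < n)%N -> ordS i != i.
Proof.
move=> n_gt1; apply/eqP => /(congr1 (@nat_of_ord n)); rewrite val_ordS.
by have := ltn_ord i; case: eqP; lia.
Qed.

Lemma ordSS_neq n (i : 'I_n) : (2 < n)%N -> ordS (ordS i) != i.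
Proof.
move=> n_gt2; apply/eqP => /(congr1 (@nat_of_ord n)); rewrite !val_ordS.
by have := ltn_ord i; case: eqP; case: eqP; lia.
Qed.

Lemma ler_sum_inj (R : numDomainType) (I J : finType) (h : I -> J)
    (P : pred I) (Q : pred J) (F : J -> R) :
  injective h -> (forall i, P i -> Q (h i)) -> (forall j, Q j -> 0 <= F j) ->
  \sum_(i | P i) F (h i) <= \sum_(j | Q j) F j.
Proof.
move=> h_inj PQ F_ge0.
rewrite -(big_imset _ (in2W h_inj)) /= (bigID (mem (h @: P)) Q) /=.
rewrite ler_wpDr ?sumr_ge0 // => [j /andP[/F_ge0]//|].
rewrite [leRHS](eq_bigl (mem (h @: P))) // => j.
by apply/andP/idP => [[] // | /imsetP[i iP ->]]; split; [apply: PQ | apply: imset_f].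
Qed.

Lemma cyclic_sum (V : nmodType) n (F : nat -> nat -> V) : (0 < n)%N ->
  \sum_(i < n) F i (ordS i) = F n.-1 0%N + \sum_(0 <= i < n.-1) F i i.+1.
Proof.
case: n => // n _; rewrite big_ord_recr /= modnn big_mkord addrC; congr (_ + _).
by apply: eq_bigr => i _; rewrite /= modn_small // ltnS ltn_ord.
Qed.

Lemma normB_div_sqrt2_lt (R : rcfType) (a b : R) : a + b != 0 ->
  `|a - b| / Num.sqrt 2 < Num.sqrt (a ^+ 2 + b ^+ 2).
Proof.
move=> ab_neq0; have ab2_gt0 : 0 < (a + b) ^+ 2 by rewrite exprn_even_gt0.
rewrite ltr_pdivrMr ?sqrtr_gt0 ?ltr0n // -sqrtrM ?addr_ge0 ?sqr_ge0 //.
by rewrite -sqrtr_sqr ltr_sqrt; nra.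
Qed.

Definition sombor_weight (R : realType) (T : finType) (e : rel T) (u v : T) : R :=
  Num.sqrt ((deg e u)%:R ^+ 2 + (deg e v)%:R ^+ 2).

Lemma SOE (R : realType) (T : finType) (e : rel T) :
  SO R e = 2^-1 * \sum_(p : T * T | e p.1 p.2) sombor_weight R e p.1 p.2.
Proof. by []. Qed.

Lemma sombor_weightC (R : realType) (T : finType) (e : rel T) (u v : T) :
  sombor_weight R e u v = sombor_weight R e v u.
Proof. by rewrite /sombor_weight addrC. Qed.

Lemma ler_sombor_weight (R : realType) (T T' : finType) (e : rel T) (e' : rel T')
    (u v : T) (u' v' : T') :
  (deg e u <= deg e' u')%N -> (deg e v <= deg e' v')%N ->
  sombor_weight R e u v <= sombor_weight R e' u' v'.
Proof.
move=> le_u le_v; rewrite ler_sqrt ?addr_ge0 ?exprn_ge0 ?ler0n //.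
by apply: lerD; rewrite -!natrX ler_nat leq_exp2r.
Qed.

Section Circuit.

Variables (k : nat) (G : 'I_k -> sgraph) (x : forall i, vert (G i)).

Local Notation inc a := (Tagged (fun j => vert (G j)) a).
Local Notation hub i := (inc (x i)).
Local Notation e := (circ_adj G x).

Lemma circ_adj_inc i (a b : vert (G i)) : adj a b -> e (inc a) (inc b).
Proof. by move=> ab; rewrite /circ_adj /= eqxx tagged_asE ab. Qed.

Lemma deg_le_circ i (a : vert (G i)) : (deg (@adj (G i)) a <= deg e (inc a))%N.
Proof.
have inc_inj : injective (fun b : vert (G i) => inc b).
  by move=> b c /(congr1 (tagged_as (inc b))); rewrite !tagged_asE.
rewrite /deg -(card_imset _ inc_inj); apply/subset_leq_card/subsetP => w /imsetP[b].
by rewrite !inE => ab ->; apply: circ_adj_inc.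
Qed.

Lemma circ_adj_hubS i : e (hub i) (hub (ordS i)).
Proof. by apply/orP; right; apply/existsP; exists i; rewrite !eqxx. Qed.

Lemma circ_adj_Shub i : e (hub (ordS i)) (hub i).
Proof. by apply/orP; right; apply/existsP; exists i; rewrite !eqxx orbT. Qed.

Lemma deg_hub_gt0 i : (0 < deg e (hub i))%N.
Proof.
rewrite /deg card_gt0; apply/set0Pn; exists (hub (ordS i)).
by rewrite inE circ_adj_hubS.
Qed.

Lemma dxE (i : 'I_k) : dx G x i = deg e (hub i).
Proof. by rewrite /dx valK. Qed.

Variable R : realType.

Lemma sum_SOg_le :
  \sum_(i < k) SOg R (G i) <=
  2^-1 * \sum_(p | e p.1 p.2 && (tag p.1 == tag p.2)) sombor_weight R e p.1 p.2.
Proof.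
rewrite /SOg; under eq_bigr do rewrite SOE.
rewrite -mulr_sumr ler_pM2l ?invr_gt0 ?ltr0n //.
rewrite (sig_big_dep (J := fun i => (vert (G i) * vert (G i))%type) xpredT
  (fun i q => adj q.1 q.2) (fun i q => sombor_weight R (@adj (G i)) q.1 q.2)) /=.
pose h (s : {i : 'I_k & (vert (G i) * vert (G i))%type}) :=
  (inc (tagged s).1, inc (tagged s).2).
pose h' (p : circ_vert G * circ_vert G) :=
  Tagged (fun i => (vert (G i) * vert (G i))%type) (tagged p.1, tagged_as p.1 p.2).
have hK : cancel h h' by case=> i [a b]; rewrite /h /h' /= tagged_asE.
apply: le_trans (ler_sum_inj (P := fun s => adj (tagged s).1 (tagged s).2)
  (can_inj hK) _ _).
- by apply: ler_sum => -[i [a b]] _; apply: ler_sombor_weight; apply: deg_le_circ.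
- by case=> i [a b] /= ab; rewrite eqxx andbT circ_adj_inc.
- by move=> p _; apply: sqrtr_ge0.
Qed.

Lemma sum_hub_weights_le : (2 < k)%N ->
  2 * \sum_(i < k) sombor_weight R e (hub i) (hub (ordS i)) <=
  \sum_(p | e p.1 p.2 && (tag p.1 != tag p.2)) sombor_weight R e p.1 p.2.
Proof.
move=> k_gt2.
pose h (j : 'I_k + 'I_k) :=
  match j with inl i => (hub i, hub (ordS i)) | inr i => (hub (ordS i), hub i) end.
have h_inj : injective h.
  move=> [i|i] [j|j] hij; have /= ij := congr1 (fun p => tag p.1) hij;
    have /= ij' := congr1 (fun p => tag p.2) hij.
  - by rewrite ij.
  - by move: (ordSS_neq j k_gt2); rewrite -ij ij' eqxx.
  - by move: (ordSS_neq i k_gt2); rewrite ij -ij' eqxx.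
  - by rewrite ij'.
apply: le_trans (ler_sum_inj (P := xpredT) h_inj _ _).
- rewrite big_sumType /= mulr2n mulrDl mul1r lerD //.
  by apply: ler_sum => i _; rewrite sombor_weightC.
- case=> i _ /=.
  + by rewrite circ_adj_hubS eq_sym ordS_neq // ltnW.
  + by rewrite circ_adj_Shub ordS_neq // ltnW.
- by move=> p _; apply: sqrtr_ge0.
Qed.

Lemma sum_hub_dist_lt : (0 < k)%N ->
  `|(dx G x 0)%:R - (dx G x k.-1)%:R| / Num.sqrt 2
  + \sum_(0 <= i < k.-1) `|(dx G x i)%:R - (dx G x i.+1)%:R| / Num.sqrt 2
  < \sum_(i < k) sombor_weight R e (hub i) (hub (ordS i)).
Proof.
move=> k_gt0; rewrite distrC.
rewrite -(cyclic_sum (fun a b => `|(dx G x a)%:R - (dx G x b)%:R| / Num.sqrt 2 : R) k_gt0).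
apply: ltr_sum => [|i _]; first by apply/hasP; exists (Ordinal k_gt0); rewrite ?mem_index_enum.
rewrite !dxE; apply: normB_div_sqrt2_lt.
by rewrite -natrD pnatr_eq0 -lt0n addn_gt0 deg_hub_gt0.
Qed.

End Circuit.

Theorem mainTheorem3 (R : realType) (k : nat) (hk : (3 <= k)%N)
    (G : 'I_k -> sgraph) (hconn : forall i, connected_graph (G i))
    (x : forall i, vert (G i)) :
  SO R (circ_adj G x) >
    `|(dx G x 0)%:R - (dx G x k.-1)%:R| / Num.sqrt 2
    + \sum_(i < k) SOg R (G i)
    + \sum_(0 <= i < k.-1) `|(dx G x i)%:R - (dx G x i.+1)%:R| / Num.sqrt 2.
Proof.
rewrite SOE (bigID (fun p => tag p.1 == tag p.2)) /= mulrDr.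
have := sum_SOg_le x R.
have := sum_hub_weights_le x R hk.
have := sum_hub_dist_lt x R (ltnW (ltnW hk)).
lra.
Qed.
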